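(* Let $m\geq 3$ be odd, $n=3m$, and let $\mathcal{L}_n$ be the latin square defined below. Every transversal of $\mathcal{L}_n$ contains at least one entry of the block $A_{11}$.
   Context: A latin square of order $n$ is viewed as its set of entries $(r,c,s)$ (symbol $s$ in row $r$, column $c$); a transversal is a set of $n$ entries containing each row, column and symbol exactly once. Let $m\ge3$ be odd and $n=3m$. The latin square $\mathcal{L}_n$ has rows, columns and symbols in $\{0,1,\dots,n-1\}$ and is partitioned into nine $m\times m$ blocks $A_{ij}$, $i,j\in\{1,2,3\}$: for $a,b\in\{0,\dots,m-1\}$, the cell in row $(i-1)m+a$ and column $(j-1)m+b$ contains $A_{ij}[a,b]$. Writing $t$ for the residue of $a+b$ modulo $m$ in $\{0,\dots,m-1\}$, $A_{ij}[a,b]=t$ if $t\neq 0$ and $i+j\equiv 2\pmod 3$; $A_{ij}[a,b]=t+m$ if $t\neq m-1$ and $i+j\equiv 0\pmod 3$; $A_{ij}[a,b]=t+2m$ if $t\neq m-1$ and $i+j\equiv1\pmod3$; $A_{ij}[a,b]=0$ if $t=0$ and $(i,j)=(1,1)$; $A_{ij}[a,b]=2m-1$ if $t=0$ and $(i,j)=(2,3)$; $A_{ij}[a,b]=3m-1$ if $t=0$ and $(i,j)=(3,2)$; $A_{ij}[a,b]=0$ if $t=m-1$ and $(i,j)\in\{(2,2),(3,3)\}$; $A_{ij}[a,b]=2m-1$ if $t=m-1$ and $(i,j)\in\{(1,2),(3,1)\}$; $A_{ij}[a,b]=3m-1$ if $t=m-1$ and $(i,j)\in\{(1,3),(2,1)\}$.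 An entry of $\mathcal{L}_n$ is said to be in block $A_{ij}$ if its cell lies in that block. *)

From mathcomp Require Import all_boot.
Unset Printing Implicit Defensive.

Definition Lsym (m r c : nat) : nat :=
  let i := r %/ m + 1 in
  let j := c %/ m + 1 in
  let t := (r %% m + c %% m) %% m in
  if (t != 0) && ((i + j) %% 3 == 2) then t
  else if (t != m.-1) && ((i + j) %% 3 == 0) then t + m
  else if (t != m.-1) && ((i + j) %% 3 == 1) then t + 2 * m
  else if (t == 0) && (i == 1) && (j == 1) then 0
  else if (t == 0) && (i == 2) && (j == 3) then 2 * m - 1
  else if (t == 0) && (i == 3) && (j == 2) then 3 * m - 1
  else if (t == m.-1) && (((i == 2) && (j == 2)) || ((i == 3) && (j == 3))) then 0
  else if (t == m.-1) && (((i == 1) && (j == 2)) || ((i == 3) && (j == 1))) then 2 * m - 1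
  else 3 * m - 1.
(* The last branch covers t = m-1 and (i,j) in {(1,3),(2,1)}; all other
   (t,i,j) combinations are caught by an earlier branch. *)

Definition is_entry (m n : nat) (e : 'I_n * 'I_n * 'I_n) : bool :=
  nat_of_ord e.2 == Lsym m e.1.1 e.1.2.

Definition is_latin_transversal (m n : nat) (T : {set 'I_n * 'I_n * 'I_n}) : Prop :=
  [/\ #|T| = n,
      (forall e, e \in T -> is_entry m n e),
      (forall x : 'I_n, #|[set e in T | e.1.1 == x]| = 1),
      (forall x : 'I_n, #|[set e in T | e.1.2 == x]| = 1) &
      (forall x : 'I_n, #|[set e in T | e.2 == x]| = 1)].

Definition in_A11 (m n : nat) (e : 'I_n * 'I_n * 'I_n) : bool :=
  (nat_of_ord e.1.1 < m) && (nat_of_ord e.1.2 < m).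

From mathcomp Require Import all_boot zify.

(* Suppose a transversal avoids A_11.  Its m entries in the first row band and
   its m entries in the first column band are then disjoint, so exactly m of
   its entries lie in the four blocks A_22, A_23, A_32, A_33.  Outside A_11 the
   symbols 0, ..., m-1 occur only in these blocks, so they fill them.  Hence
   every entry (r, c, s) of the transversal avoids the cells of A_23 and A_32
   holding 2m-1 and 3m-1, and therefore satisfies r + c + [s = 0] = s (mod m).
   Summing over the transversal gives 2N + 1 = N (mod m) for
   N = 0 + 1 + ... + (3m-1) = C(3m, 2); as m is odd, m divides N, so m | 1. *)

Lemma modn_shift m x y : y = x \/ y = x + m \/ y = x + 2 * m \/ x = y + m -> x = y %[mod m].
Proof. by case=> [|[|[|]]] ->; rewrite ?modnDr // addnC modnMDl. Qed.

Lemma dvdn_bin2_odd n : odd n -> n %| 'C(n, 2).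
Proof. by move=> n_odd; rewrite bin2odd // dvdn_mulr. Qed.

Lemma sum_ord_id n : \sum_(x < n) (x : nat) = 'C(n, 2).
Proof. by rewrite -(big_mkord xpredT id) bin2_sum. Qed.

Lemma card_ord_lt n k : k <= n -> #|[set x : 'I_n | x < k]| = k.
Proof.
by move=> kn; rewrite -sum1dep_card (big_ord_narrow_cond (P := predT)) // sum1_card card_ord.
Qed.

Lemma sum_indicator (A : finType) (D : {pred A}) (P : pred A) :
  \sum_(e in D) (P e : nat) = #|[set e in D | P e]|.
Proof. by rewrite -sum1dep_card big_mkcondr. Qed.

Section Transversal.

Context {A B : finType} {T : {set A}} {g : A -> B}.
Hypothesis g_fibre1 : forall x, #|[set e in T | g e == x]| = 1.

Lemma sum_transversal (F : B -> nat) : \sum_(e in T) F (g e) = \sum_x F x.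
Proof.
rewrite (partition_big g predT) //=; apply: eq_bigr => x _.
rewrite (eq_bigr (fun _ => F x)); last by move=> e /andP[_ /eqP ->].
by rewrite sum_nat_cond_const g_fibre1 mul1n.
Qed.

Lemma card_transversal (P : pred B) : #|[set e in T | P (g e)]| = #|[set x | P x]|.
Proof.
by rewrite -sum_indicator (sum_transversal (fun x => P x : nat)) -sum1dep_card [RHS]big_mkcond.
Qed.

End Transversal.

(* The congruence fails only at 0 in A_11 and at 2m-1, 3m-1 in A_23, A_32,
   all sitting where r + c = 0 (mod m). *)
Lemma Lsym_off_A11 {m r c} : 1 < m -> r < 3 * m -> c < 3 * m -> ~~ ((r < m) && (c < m)) ->
  (Lsym m r c < m -> (m <= r) && (m <= c)) /\
  ((r < m) || (c < m) || (Lsym m r c < m) ->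
     r + c + (Lsym m r c == 0) = Lsym m r c %[mod m]).
Proof.
move=> m_gt1 r_lt c_lt; have m_gt0 : 0 < m by lia.
have [i3 am] : r %/ m < 3 /\ r %% m < m by rewrite ltn_divLR // ltn_pmod.
have [j3 bm] : c %/ m < 3 /\ c %% m < m by rewrite ltn_divLR // ltn_pmod.
rewrite (divn_eq r m) (divn_eq c m) addnACA -mulnDl -addnA modnMDl -modnDml.
move: i3 j3 am bm; move: (r %/ m) (c %/ m) (r %% m) (c %% m) => i j a b i3 j3 am bm.
rewrite /Lsym !divnMDl // !modnMDl (divn_small am) (divn_small bm).
rewrite (modn_small am) (modn_small bm).
have := ltn_pmod (a + b) m_gt0; move: (_ %% m) => t tm.
move: i3 j3; case: i => [|[|[|//]]]; case: j => [|[|[|//]]] // _ _.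
all: rewrite ?mul0n ?mul1n ?add0n => not_A11; (repeat case: ifP => ?).
all: split=> [|cell]; [lia | apply: modn_shift; do ?[left; lia | right]; lia].
Qed.

Section TransversalOffA11.

Context {m : nat} {T : {set 'I_(3 * m) * 'I_(3 * m) * 'I_(3 * m)}}.
Hypotheses (m_gt1 : 1 < m) (m_odd : odd m) (T_transversal : is_latin_transversal m (3 * m) T).
Hypothesis T_off_A11 : forall e, e \in T -> ~~ in_A11 m (3 * m) e.

Lemma small_symbol_lower_right e : e \in T -> e.2 < m -> (m <= e.1.1) && (m <= e.1.2).
Proof.
move=> eT; have [_ entries _ _ _] := T_transversal.
move/eqP: (entries e eT) => ->.
by case: (Lsym_off_A11 m_gt1 (ltn_ord e.1.1) (ltn_ord e.1.2) (T_off_A11 _ eT)).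
Qed.

Lemma card_lower_right : #|[set e in T | (m <= e.1.1) && (m <= e.1.2)]| = m.
Proof.
have [T_card _ rows1 cols1 _] := T_transversal.
have rows_m := card_transversal rows1 (fun x => x < m).
have cols_m := card_transversal cols1 (fun x => x < m).
rewrite card_ord_lt ?leq_pmull // in rows_m cols_m.
suff : #|T| = #|[set e in T | e.1.1 < m]| + #|[set e in T | e.1.2 < m]|
              + #|[set e in T | (m <= e.1.1) && (m <= e.1.2)]| by lia.
rewrite -sum1_card -!sum_indicator -!big_split /=.
apply: eq_bigr => e /T_off_A11; rewrite /in_A11.
by case: (ltnP e.1.1 m); case: (ltnP e.1.2 m).
Qed.

Lemma lower_right_small_symbol e : e \in T -> (m <= e.1.1) && (m <= e.1.2) -> e.2 < m.
Proof.
move=> eT lr; have [_ _ _ _ syms1] := T_transversal.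
have S_m := card_transversal syms1 (fun x => x < m).
rewrite card_ord_lt ?leq_pmull // in S_m.
have /eqP S_U : [set e in T | e.2 < m] == [set e in T | (m <= e.1.1) && (m <= e.1.2)].
  rewrite eqEcard card_lower_right S_m leqnn andbT.
  by apply/subsetP => f; rewrite !inE => /andP[fT small]; rewrite fT small_symbol_lower_right.
have : e \in [set e in T | (m <= e.1.1) && (m <= e.1.2)] by rewrite inE eT lr.
by rewrite -S_U inE => /andP[].
Qed.

Lemma symbol_congr e : e \in T -> e.1.1 + e.1.2 + (e.2 == 0 :> nat) = e.2 %[mod m].
Proof.
move=> eT; have [_ entries _ _ _] := T_transversal.
have [_ congr] := Lsym_off_A11 m_gt1 (ltn_ord e.1.1) (ltn_ord e.1.2) (T_off_A11 _ eT).
rewrite -(eqP (entries e eT)) in congr; apply: congr.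
case: (ltnP e.1.1 m) => //= r_ge; case: (ltnP e.1.2 m) => //= c_ge.
by rewrite lower_right_small_symbol // r_ge c_ge.
Qed.

Lemma no_transversal_off_A11 : False.
Proof.
have [_ _ rows1 cols1 syms1] := T_transversal.
have sum_mod : \sum_(e in T) (e.1.1 + e.1.2 + (e.2 == 0 :> nat))
               = \sum_(e in T) (e.2 : nat) %[mod m].
  by rewrite -[LHS]modn_summ -[RHS]modn_summ (eq_bigr _ (fun e => @symbol_congr e)).
have sym0_once : \sum_(e in T) (e.2 == 0 :> nat) = 1.
  have m3_gt0 : 0 < 3 * m by lia.
  by rewrite sum_indicator -[RHS](syms1 (Ordinal m3_gt0)); apply: eq_card => e; rewrite !inE.
rewrite !big_split /= sym0_once (sum_transversal rows1 (@nat_of_ord _)) in sum_mod.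
rewrite (sum_transversal cols1 (@nat_of_ord _)) (sum_transversal syms1 (@nat_of_ord _)) in sum_mod.
have : m %| \sum_(x < 3 * m) (x : nat).
  rewrite sum_ord_id; apply: dvdn_trans (dvdn_mull 3 (dvdnn m)) _.
  by rewrite dvdn_bin2_odd // oddM m_odd.
case/dvdnP=> k sum_km; move: sum_mod; rewrite sum_km -mulnDl modnMDl modnMl.
by rewrite modn_small.
Qed.

End TransversalOffA11.

Theorem lemma14 (m : nat) (Hm3 : 3 <= m) (Hodd : odd m)
    (T : {set 'I_(3 * m) * 'I_(3 * m) * 'I_(3 * m)}) :
  is_latin_transversal m (3 * m) T -> exists2 e, e \in T & in_A11 m (3 * m) e.
Proof.
move=> T_transversal.
have [/exists_inP // | /exists_inPn off_A11] := boolP [exists e in T, in_A11 m (3 * m) e].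
have m_gt1 : 1 < m by lia.
by case: (no_transversal_off_A11 m_gt1 Hodd T_transversal off_A11).
Qed.
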